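(* Let $S=K[x_1,\ldots,x_n]$. If $I$ is an $f$-ideal of $S$ of degree $2$, then $I$ is of $l$ type for some $1\le l\le\lfloor n/2\rfloor$ if and only if the complement graph $\overline{\tau(G(I))}$ is bipartite.
   Context: $K$ is a field; $G(I)$ is the minimal monomial generating set of $I$; ''of degree $2$'' means all elements of $G(I)$ have degree $2$. With $\sigma$ the bijection $x_{i_1}\cdots x_{i_k}\mapsto\{i_1,\ldots,i_k\}$, the facet complex $\delta_{\mathcal{F}}(I)$ has facets $\sigma(g)$, $g\in G(I)$, the Stanley–Reisner complex is $\delta_{\mathcal{N}}(I)=\{\sigma(g)\mid g \text{ square-free monomial},\ g\notin I\}$, and $I$ is an $f$-ideal if both complexes have the same $f$-vector. For a nonempty proper subset $B\subset[n]$ with complement $\overline B$, $W_B=\{x_ix_j\mid i,j\in B \text{ or } i,j\in\overline B,\ i\neq j\}$. A set $A$ of square-free monomials of degree 2 satisfies $l^{th}$ TPCS if $W_B\subseteq A$ for some $B\subseteq[n]$ with $|B|=l$; an $f$-ideal $I$ is of $l$ type if $G(I)$ satisfies $l^{th}$ TPCS. For $A$ a set of degree-2 square-free monomials, $\tau(A)$ is the graph on vertices $v_1,\ldots,v_n$ with $v_iv_j$ an edge iff $x_ix_j\in A$. *)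

(* Squarefree monomials in x_1..x_n are identified (via sigma)
   with subsets of the variable index set 'I_n. A squarefree monomial ideal I
   of degree 2 is given by its minimal generating set G(I), i.e. a set of
   2-element subsets of 'I_n. *)
From mathcomp Require Import all_boot all_order.
Set Implicit Arguments. Unset Strict Implicit. Unset Printing Implicit Defensive.

Section Defs.
Variable n : nat.
Implicit Types (G A : {set {set 'I_n}}) (B F : {set 'I_n}).

Definition sqfree_deg2 G := forall e, e \in G -> #|e| = 2.

Definition facet_complex G : {set {set 'I_n}} :=
  [set F : {set 'I_n} | [exists e in G, F \subset e]].

(* Stanley--Reisner complex: sigma(g) for squarefree monomials g not in I;
   g lies in the monomial ideal I iff some generator divides g. *)
Definition SR_complex G : {set {set 'I_n}} :=
  [set F : {set 'I_n} | [forall e in G, ~~ (e \subset F)]].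

(* f_{k-1}: number of faces with k vertices *)
Definition fcount (D : {set {set 'I_n}}) (k : nat) := #|[set F in D | #|F| == k]|.

Definition f_ideal G := forall k, fcount (facet_complex G) k = fcount (SR_complex G) k.

Definition W_B B : {set {set 'I_n}} :=
  [set e : {set 'I_n} | (#|e| == 2) && ((e \subset B) || (e \subset ~: B))].

Definition TPCS (l : nat) A := exists B, #|B| = l /\ W_B B \subset A.

Definition of_l_type (l : nat) G := TPCS l G.

Definition tau_adj A : rel 'I_n := fun i j => (i != j) && ([set i; j] \in A).
Definition compl_tau_adj A : rel 'I_n := fun i j => (i != j) && ~~ ([set i; j] \in A).

Definition bipartite (r : rel 'I_n) :=
  exists c : 'I_n -> bool, forall i j, r i j -> c i != c j.
End Defs.

(* A colouring of the complement graph by the two sides of B is proper exactly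
   when every non-generator pair crosses between B and its complement, i.e. when
   W_B is contained in G. For the converse one only has to see that both sides
   of a proper colouring are nonempty: the f-ideal condition forces G to have a
   generator (comparing the empty faces) and then a square-free degree-2 monomial
   outside I (comparing the edges), and the two ends of that non-edge receive
   different colours. The smaller side then has between 1 and n/2 elements. *)
From mathcomp Require Import all_boot all_order.
From mathcomp Require Import zify.

Set Implicit Arguments.
Unset Strict Implicit.
Unset Printing Implicit Defensive.

Section TwoPartition.
Variable n : nat.
Implicit Types (A G : {set {set 'I_n}}) (B : {set 'I_n}).

Lemma W_BC B : W_B (~: B) = W_B B.
Proof. by apply/setP => e; rewrite !inE setCK [(_ \subset ~: B) || _]orbC. Qed.

Lemma W_B_sub_bipartite A B : W_B B \subset A -> bipartite (compl_tau_adj A).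
Proof.
move=> sWA; exists (fun i => i \in B) => i j /andP[ij /negP ijA].
apply/negP => /eqP same_side; apply: ijA; apply: (subsetP sWA).
rewrite inE cards2 ij /=.
case iB: (i \in B); move: same_side; rewrite iB => /esym jB.
  by rewrite subUset !sub1set iB jB.
by apply/orP; right; rewrite subUset !sub1set !inE iB jB.
Qed.

Lemma colour_class_W_B_sub A (c : 'I_n -> bool) :
  (forall i j, compl_tau_adj A i j -> c i != c j) -> W_B [set i | c i] \subset A.
Proof.
move=> c_proper; apply/subsetP => e; rewrite inE => /andP[/cards2P[u [v [uv ->]]]].
have uuv : u \in [set u; v] by rewrite !inE eqxx.
have vuv : v \in [set u; v] by rewrite !inE eqxx orbT.
move=> side; apply/negPn/negP => uvA.
have := c_proper u v; rewrite /compl_tau_adj uv uvA => /(_ isT).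
by case/orP: side => /subsetP side; move: (side u uuv) (side v vuv);
  rewrite !inE; case: (c u); case: (c v).
Qed.

Lemma TPCS_half A B :
  0 < #|B| -> 0 < #|~: B| -> W_B B \subset A ->
  exists l, 1 <= l <= n./2 /\ TPCS l A.
Proof.
wlog small : B / #|B| <= #|~: B|.
  move=> hwlog B0 BC0 sWA; case: (leqP #|B| #|~: B|) => [small | /ltnW small].
    exact: hwlog small B0 BC0 sWA.
  by apply: (hwlog (~: B)); rewrite ?setCK ?W_BC.
move=> B0 _ sWA; exists #|B|; split; last by exists B.
have := cardsC B; rewrite card_ord => sum_n.
by rewrite B0 geq_half_double -addnn; lia.
Qed.

Section FIdeal.
Variable G : {set {set 'I_n}}.
Hypotheses (G_deg2 : sqfree_deg2 G) (G_f : f_ideal G).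

Lemma f_ideal_exists_gen : exists e, e \in G.
Proof.
have : 0 < fcount (SR_complex G) 0.
  rewrite card_gt0; apply/set0Pn; exists set0.
  rewrite !inE cards0 eqxx andbT; apply/forall_inP => e eG.
  by rewrite subset0 -cards_eq0 G_deg2.
rewrite -G_f card_gt0 => /set0Pn[F]; rewrite !inE => /andP[/exists_inP[e eG _] _].
by exists e.
Qed.

Lemma f_ideal_exists_nonedge : exists x y : 'I_n, x != y /\ [set x; y] \notin G.
Proof.
have [e eG] := f_ideal_exists_gen.
have : 0 < fcount (SR_complex G) 2.
  rewrite -G_f card_gt0; apply/set0Pn; exists e.
  by rewrite !inE G_deg2 // eqxx andbT; apply/exists_inP; exists e.
rewrite card_gt0 => /set0Pn[F]; rewrite !inE => /andP[/forall_inP F_SR].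
case/cards2P => x [y [xy FE]]; exists x, y; split=> //.
by apply/negP => /F_SR; rewrite -FE subxx.
Qed.

End FIdeal.
End TwoPartition.

Theorem proposition4p4 (n : nat) (G : {set {set 'I_n}}) :
  sqfree_deg2 G -> f_ideal G ->
  ((exists l : nat, 1 <= l <= n./2 /\ of_l_type l G) <->
   bipartite (compl_tau_adj G)).
Proof.
move=> G_deg2 G_f; split.
  by move=> [l [_ [B [_ sWG]]]]; exact: W_B_sub_bipartite sWG.
move=> [c c_proper]; set B := [set i | c i].
have [x [y [xy xyG]]] := f_ideal_exists_nonedge G_deg2 G_f.
have sides : (x \in B) != (y \in B).
  by rewrite !inE; apply: c_proper; rewrite /compl_tau_adj xy xyG.
have [B0 BC0] : 0 < #|B| /\ 0 < #|~: B|.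
  rewrite !card_gt0; split; apply/set0Pn; case: (boolP (x \in B)) => xB.
  - by exists x.
  - by exists y; move: sides; rewrite (negbTE xB); case: (y \in B).
  - by exists y; rewrite inE; move: sides; rewrite xB; case: (y \in B).
  - by exists x; rewrite inE.
exact: TPCS_half B0 BC0 (colour_class_W_B_sub c_proper).
Qed.
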